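(* There is an absolute constant $C$ such that the following holds. Let $\mathcal D$ be an atomic filtration on $I_0=[0,1]$ (as described in the context) and let $f\in L^1(I_0)$. Then there exists a sparse collection $\mathcal S\subset\mathcal D$ (depending on $f$) such that $Sf(x)\le C\,S_{\mathcal S}f(x)$ for almost every $x\in I_0$.
   Context: $I_0=[0,1]$ carries a probability measure $\nu$ ($|I|=\nu(I)$). Atomic filtration: an increasing sequence of $\sigma$-algebras $\mathcal F_n$, $n\ge0$, with $\mathcal F_0$ trivial, each generated by a finite partition $\mathcal D_n$ of $I_0$ into sets of positive measure (atoms), $\mathcal D_0=\{I_0\}$; an atom is formally a pair $(I,n)$, $I\in\mathcal D_n$, and $\mathcal D=\bigcup_n\mathcal D_n$; $\mathrm{ch}(I)$ are the atoms of $\mathcal D_{n+1}$ contained in $I$. Averages $\langle f\rangle_I=|I|^{-1}\int_If\,d\nu$, $\mathbb E_If=\langle f\rangle_I\mathbf 1_I$, $\Delta_If=\sum_{I'\in\mathrm{ch}(I)}\mathbb E_{I'}f-\mathbb E_If$, $Sf=\big(\sum_{I\in\mathcal D}(\Delta_If)^2\big)^{1/2}$. A collection $\mathcal S\subset\mathcal D$ is sparse if for every $J\in\mathcal S$, $\sum_{I\in\mathrm{ch}_{\mathcal S}J}|I|\le|J|/2$, where $\mathrm{ch}_{\mathcal S}J$ denotes the maximal (by inclusion) elements of $\mathcal S$ strictly contained in $J$. Sparse square function: $S_{\mathcal S}f(x)=\big(\sum_{I\in\mathcal S}\langle|f|\rangle_I^2\mathbf 1_I(x)\big)^{1/2}$.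 *)

From HB Require Import structures.
From mathcomp Require Import all_boot all_order all_algebra.
From mathcomp Require Import all_classical all_reals all_analysis.
Set Implicit Arguments. Unset Strict Implicit. Unset Printing Implicit Defensive.
Import Order.TTheory GRing.Theory Num.Theory.
Local Open Scope classical_set_scope.
Local Open Scope ring_scope.

Section Defs.
Context {R : realType}.

Definition I0 : set R := `[0%R, 1%R]%classic.

Definition atomic_filtration (mu : {measure set R -> \bar R}) (D : nat -> set (set R)) : Prop :=
  D 0%N = [set I0] /\
  forall n, [/\ finite_set (D n),
                (forall I, D n I -> measurable I /\ (0 < mu I)%E),
                trivIset (D n) id,
                \bigcup_(I in D n) I = I0 &
                (forall J, D n.+1 J -> exists2 I, D n I & J `<=` I)].

Definition atoms (D : nat -> set (set R)) : set (nat * set R) := [set p | D p.1 p.2].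

Definition ch (D : nat -> set (set R)) (p : nat * set R) : set (set R) :=
  [set J | D p.1.+1 J /\ J `<=` p.2].

Definition atom_lt (p q : nat * set R) : Prop :=
  [/\ (q.1 <= p.1)%N, p.2 `<=` q.2 & p <> q].

Definition chS (S : set (nat * set R)) (J : nat * set R) : set (nat * set R) :=
  [set K | [/\ S K, atom_lt K J &
              ~ exists K', [/\ S K', atom_lt K K' & atom_lt K' J]]].

Definition sparse (mu : {measure set R -> \bar R}) (D : nat -> set (set R))
    (S : set (nat * set R)) : Prop :=
  S `<=` atoms D /\
  forall J, S J -> (\esum_(K in chS S J) mu K.2 <= (2^-1)%:E * mu J.2)%E.

Definition avg (mu : {measure set R -> \bar R}) (I : set R) (f : R -> R) : R :=
  (fine (mu I))^-1 * Rintegral mu I f.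

Definition condE (mu : {measure set R -> \bar R}) (I : set R) (f : R -> R) (x : R) : R :=
  avg mu I f * \1_I x.

Definition mdiff (mu : {measure set R -> \bar R}) (D : nat -> set (set R))
    (p : nat * set R) (f : R -> R) (x : R) : R :=
  (\sum_(J \in ch D p) condE mu J f x)%R - condE mu p.2 f x.

Definition sqfun (mu : {measure set R -> \bar R}) (D : nat -> set (set R))
    (f : R -> R) (x : R) : \bar R :=
  sqrte (\esum_(p in atoms D) ((mdiff mu D p f x) ^+ 2)%:E).

Definition sparse_sqfun (mu : {measure set R -> \bar R}) (S : set (nat * set R))
    (f : R -> R) (x : R) : \bar R :=
  sqrte (\esum_(p in S) ((avg mu p.2 (fun y => `|f y|)) ^+ 2 * \1_(p.2) x)%:E).

End Defs.

(* Stop along the chain of atoms containing x at generation t, after the previous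
   stopping generation s, as soon as either <|f|> at t exceeds 4 <|f|> at s, or the sum
   of the squared martingale differences between s and t exceeds 96 <|f|>_s^2.  Between
   two stopping generations the square function is thus controlled by <|f|> at the
   earlier one, which gives S f <= sqrt 130 S_S f pointwise, S being the stopping atoms.
   The children in S of a stopping atom I that stop for the first reason have total mass
   at most |I|/4, because they are disjoint and carry more than 4 <|f|>_I each.  Those
   that stop for the second reason also have total mass at most |I|/4: along the
   martingale capped at 4 <|f|>_I, the integral over I of the squared differences is at
   most 24 <|f|>_I^2 |I|, by a supermartingale argument. *)

From HB Require Import structures.
From mathcomp Require Import all_boot all_order all_algebra finmap.
From mathcomp Require Import all_classical all_reals all_analysis.
From mathcomp Require Import lra.
Import Order.TTheory GRing.Theory Num.Theory.
Set Implicit Arguments. Unset Strict Implicit. Unset Printing Implicit Defensive.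
Local Open Scope classical_set_scope.
Local Open Scope ring_scope.

Lemma Rintegral_big_setU d (T : measurableType d) (R : realType)
    (mu : {measure set T -> \bar R}) (A : set T) (g : T -> R) (s : seq (set T)) :
  measurable A -> mu.-integrable A (EFin \o g) -> uniq s ->
  (forall L, L \in s -> measurable L /\ L `<=` A) ->
  (forall L L' x, L \in s -> L' \in s -> L x -> L' x -> L = L') ->
  \int[mu]_(x in \big[setU/set0]_(L <- s) L) g x = \sum_(L <- s) \int[mu]_(x in L) g x.
Proof.
move=> mA ig; elim: s => [|h t IH]; first by rewrite !big_nil Rintegral_set0.
move=> /= /andP[ht ut] hs hdisj.
have sub_t L : L \in t -> L \in h :: t by move=> Lt; rewrite inE Lt orbT.
have mt : measurable (\big[setU/set0]_(L <- t) L).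
  by rewrite big_seq; apply: bigsetU_measurable => L /sub_t /hs [].
have tA : \big[setU/set0]_(L <- t) L `<=` A.
  by move=> x; rewrite -bigcup_seq => -[L /= /sub_t /hs [_ LA] /LA].
have [mh hA] := hs h (mem_head _ _).
rewrite !big_cons Rintegral_setU //.
- rewrite IH // => [L /sub_t|L L' x /sub_t Lt /sub_t L't]; [exact: hs|exact: hdisj].
- by apply: integrableS ig => //; [exact: measurableU|move=> x [/hA|/tA]].
- apply/eqP; rewrite -subset0 => x [hx]; rewrite -bigcup_seq => -[L /= Lt Lx].
  by move: ht; rewrite (hdisj h L x (mem_head _ _) (sub_t _ Lt) hx Lx) Lt.
Qed.

Lemma sumr_le_unique (R : numDomainType) (T : eqType) (s : seq T) (Q : pred T) (c : R) :
  uniq s -> 0 <= c -> {in s &, forall a b, Q a -> Q b -> a = b} ->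
  \sum_(a <- s | Q a) c <= c.
Proof.
move=> us c0 hu; have [/hasP [w ws Qw]|/hasPn nQ] := boolP (has Q s).
  rewrite big_mkcond (bigD1_seq w) //= Qw big1_seq ?addr0 // => a /andP[naw aS].
  by case: ifP => // Qa; move: naw; rewrite (hu a w aS ws Qa Qw) eqxx.
by rewrite big1_seq // => a /andP[Qa /nQ]; rewrite Qa.
Qed.

Lemma sumr_unique (R : nmodType) (T : eqType) (s : seq T) (Q : pred T) (c : R) :
  uniq s -> has Q s -> {in s &, forall a b, Q a -> Q b -> a = b} ->
  \sum_(a <- s | Q a) c = c.
Proof.
move=> us /hasP [w ws Qw] hu.
rewrite big_mkcond (bigD1_seq w) //= Qw big1_seq ?addr0 // => a /andP[naw aS].
by case: ifP => // Qa; move: naw; rewrite (hu a w aS ws Qa Qw) eqxx.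
Qed.

Lemma ler_sum_mem (R : numDomainType) (T : eqType) (s : seq T) (F : T -> R) w :
  uniq s -> w \in s -> {in s, forall a, 0 <= F a} -> F w <= \sum_(a <- s) F a.
Proof.
move=> us ws F0; rewrite (bigD1_seq w) //= lerDl big_seq_cond sumr_ge0 // => a /andP[aS _].
exact: F0.
Qed.

Section Averages.
Context (R : realType) (mu : {measure set R -> \bar R}).

Lemma avg_norm_ge0 (L : set R) (g : R -> R) : 0 <= avg mu L (fun y => `|g y|).
Proof.
apply: mulr_ge0; first by rewrite invr_ge0 fine_ge0.
by apply: Rintegral_ge0.
Qed.

Lemma normr_avg_le (L : set R) (g : R -> R) :
  measurable L -> mu.-integrable L (EFin \o g) ->
  `|avg mu L g| <= avg mu L (fun y => `|g y|).
Proof.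
move=> mL ig; rewrite normrM ger0_norm ?invr_ge0 ?fine_ge0 //.
by rewrite ler_wpM2l ?invr_ge0 ?fine_ge0 // le_normr_Rintegral.
Qed.

End Averages.

Section Atoms.
Context {R : realType} (nu : probability R R) (D : nat -> set (set R)).
Hypothesis hD : atomic_filtration nu D.

Lemma measurable_I0 : measurable (I0 : set R).
Proof. exact: measurable_itv. Qed.

Lemma atoms_finite n : finite_set (D n).
Proof. by case: (hD.2 n). Qed.

Lemma atom_measurable n L : D n L -> measurable L.
Proof. by case: (hD.2 n) => _ h _ _ _ /h []. Qed.

Lemma atom_gt0 n L : D n L -> (0 < nu L)%E.
Proof. by case: (hD.2 n) => _ h _ _ _ /h []. Qed.

Lemma atom_subI0 n L : D n L -> L `<=` I0.
Proof. by case: (hD.2 n) => _ _ _ hU _ DL x Lx; rewrite -hU; exists L. Qed.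

Lemma atom_eq n L L' x : D n L -> D n L' -> L x -> L' x -> L = L'.
Proof. by case: (hD.2 n) => _ _ ht _ _ DL DL' Lx L'x; apply: ht => //; exists x. Qed.

Lemma atom_cover n x : I0 x -> exists L, D n L /\ L x.
Proof. by case: (hD.2 n) => _ _ _ hU _; rewrite -hU => -[L DL Lx]; exists L. Qed.

Lemma atom_parent n L : D n.+1 L -> exists2 I, D n I & L `<=` I.
Proof. by case: (hD.2 n) => _ _ _ _; apply. Qed.

Lemma atom_fin_num n L : D n L -> nu L \is a fin_num.
Proof.
move=> DL; rewrite ge0_fin_numE//.
by apply: le_lt_trans (probability_le1 nu (atom_measurable DL)) _; exact: ltry.
Qed.

Lemma atom_nonempty n L : D n L -> exists x, L x.
Proof.
move=> DL; apply/set0P/negP => /eqP L0.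
by move: (atom_gt0 DL); rewrite L0 measure0 ltxx.
Qed.

Definition mass (L : set R) : R := fine (nu L).

Lemma mass_gt0 n L : D n L -> 0 < mass L.
Proof. by move=> DL; rewrite -lte_fin fineK; [exact: atom_gt0 DL|exact: atom_fin_num DL]. Qed.

Lemma Rintegral_cst1 L : measurable L -> \int[nu]_(x in L) 1 = mass L.
Proof. by move=> mL; rewrite Rintegral_cst // mul1r. Qed.

Definition atom_at n x : set R := xget set0 [set L | D n L /\ L x].

Lemma atom_atP n x : I0 x -> D n (atom_at n x) /\ atom_at n x x.
Proof. by move=> /(atom_cover n) h; exact: (xgetPex set0 h). Qed.

Lemma atom_atE n x L : I0 x -> D n L -> L x -> atom_at n x = L.
Proof. by move=> x0 DL Lx; have [Da ax] := atom_atP n x0; exact: atom_eq Da DL ax Lx. Qed.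

Lemma atom_at_subS n x : I0 x -> atom_at n.+1 x `<=` atom_at n x.
Proof.
move=> x0; have [Da ax] := atom_atP n.+1 x0; have [I DI sI] := atom_parent Da.
by rewrite (atom_atE x0 DI (sI _ ax)).
Qed.

Lemma atom_at_sub j n x : I0 x -> (j <= n)%N -> atom_at n x `<=` atom_at j x.
Proof.
move=> x0; elim: n => [|n IH]; first by rewrite leqn0 => /eqP ->.
rewrite leq_eqVlt => /orP[/eqP -> //|]; rewrite ltnS => /IH.
by apply: subset_trans; exact: atom_at_subS.
Qed.

Lemma atom_at_mem n x y : I0 x -> atom_at n x y -> I0 y /\ atom_at n y = atom_at n x.
Proof.
move=> x0 h; have [Da _] := atom_atP n x0; have y0 := atom_subI0 Da h.
by split => //; exact: atom_atE y0 Da h.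
Qed.

Definition adapted T n (g : R -> T) :=
  forall x y, I0 x -> I0 y -> atom_at n x = atom_at n y -> g x = g y.

Lemma adapted_atom_at j n : (j <= n)%N -> adapted n (atom_at j).
Proof.
move=> jn x y x0 y0 e; have [Dj yj] := atom_atP j y0.
apply: (atom_atE x0 Dj); apply: (atom_at_sub y0 jn); rewrite -e.
exact: (atom_atP n x0).2.
Qed.

Definition subatoms m (L : set R) : seq (set R) :=
  enum_fset (fset_set [set L' | D m L' /\ L' `<=` L]).

Lemma subatomsP m L L' : L' \in subatoms m L <-> D m L' /\ L' `<=` L.
Proof.
have fin : finite_set [set L' | D m L' /\ L' `<=` L].
  by apply: sub_finite_set (atoms_finite m) => ? [].
rewrite /subatoms -[L' \in enum_fset _]/(L' \in fset_set _) in_fset_set // inE.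
by [].
Qed.

Lemma subatoms_uniq m L : uniq (subatoms m L).
Proof. exact: fset_uniq. Qed.

Lemma subatoms_cover n m L : (n <= m)%N -> D n L ->
  \big[setU/set0]_(L' <- subatoms m L) L' = L.
Proof.
move=> nm DL; apply/seteqP; split.
  by move=> x; rewrite -bigcup_seq => -[L' /= /subatomsP [_ sL] /sL].
move=> x Lx; have x0 := atom_subI0 DL Lx; have [Dm xm] := atom_atP m x0.
rewrite -bigcup_seq; exists (atom_at m x) => //=; apply/subatomsP; split => //.
by rewrite -(atom_atE x0 DL Lx); exact: atom_at_sub.
Qed.

Lemma Rintegral_subatoms n m L (g : R -> R) :
  nu.-integrable I0 (EFin \o g) -> (n <= m)%N -> D n L ->
  \int[nu]_(x in L) g x = \sum_(L' <- subatoms m L) \int[nu]_(x in L') g x.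
Proof.
move=> ig nm DL; rewrite -{1}(subatoms_cover nm DL).
apply: Rintegral_big_setU measurable_I0 ig (subatoms_uniq _ _) _ _.
- by move=> L' /subatomsP [DL' _]; split; [exact: atom_measurable DL'|exact: atom_subI0 DL'].
- by move=> L1 L2 x /subatomsP[D1 _] /subatomsP[D2 _]; exact: atom_eq D1 D2.
Qed.

Lemma mass_subatoms n m L : (n <= m)%N -> D n L ->
  mass L = \sum_(L' <- subatoms m L) mass L'.
Proof.
move=> nm DL; have ig1 : nu.-integrable I0 (EFin \o (fun _ : R => 1 : R)).
  exact: finite_measure_integrable_cst measurable_I0.
have /= int1E := Rintegral_subatoms ig1 nm DL.
rewrite -Rintegral_cst1 ?int1E; last exact: atom_measurable DL.
apply: eq_big_seq => L' /subatomsP [DL' _].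
by rewrite Rintegral_cst1 //; exact: atom_measurable DL'.
Qed.

Definition subsetb (A B : set R) : bool := `[< A `<=` B >].

Lemma perm_subatoms m L I : L `<=` I ->
  perm_eq (subatoms m L) [seq L' <- subatoms m I | subsetb L' L].
Proof.
move=> LI; apply: uniq_perm; [exact: subatoms_uniq|exact/filter_uniq/subatoms_uniq|].
move=> L'; rewrite mem_filter; apply/idP/idP.
  move=> /subatomsP [DL' sL]; apply/andP; split; first exact/asboolP.
  by apply/subatomsP; split => //; exact: subset_trans LI.
by move=> /andP[/asboolP sL /subatomsP [DL' _]]; apply/subatomsP.
Qed.

Lemma subatoms_parent n m I L' : D n I -> (n <= m)%N -> L' \in subatoms m.+1 I ->
  exists2 L, L \in subatoms m I & L' `<=` L.
Proof.
move=> DI nm /subatomsP [DL' sL']; have [L DL sL] := atom_parent DL'.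
exists L => //; apply/subatomsP; split => //.
have [z zL'] := atom_nonempty DL'; have z0 := atom_subI0 DL' zL'.
rewrite -(atom_atE z0 DL (sL _ zL')) -(atom_atE z0 DI (sL' _ zL')).
exact: atom_at_sub.
Qed.

Lemma atom_sub_eq n m L1 L2 L' : D n L1 -> D n L2 -> D m L' ->
  L' `<=` L1 -> L' `<=` L2 -> L1 = L2.
Proof.
move=> D1 D2 DL' s1 s2; have [z zL'] := atom_nonempty DL'.
exact: atom_eq D1 D2 (s1 _ zL') (s2 _ zL').
Qed.

Lemma big_subatomsS n m I (F : set R -> R) : D n I -> (n <= m)%N ->
  \sum_(L' <- subatoms m.+1 I) F L' =
  \sum_(L <- subatoms m I) \sum_(L' <- subatoms m.+1 L) F L'.
Proof.
move=> DI nm.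
transitivity (\sum_(L <- subatoms m I) \sum_(L' <- subatoms m.+1 I | subsetb L' L) F L');
  last first.
  apply: eq_big_seq => L /subatomsP [DL LI].
  by rewrite (perm_big _ (perm_subatoms m.+1 LI)) big_filter.
under [RHS]eq_bigr do rewrite big_mkcond.
rewrite exchange_big /=; apply: eq_big_seq => L' L'in.
rewrite -big_mkcond /= sumr_unique //; first exact: subatoms_uniq.
  have [L Lin sL] := subatoms_parent DI nm L'in.
  by apply/hasP; exists L => //; exact/asboolP.
move=> a b /subatomsP [Da _] /subatomsP [Db _] /asboolP sa /asboolP sb.
by move: L'in => /subatomsP [DL' _]; exact: atom_sub_eq Da Db DL' sa sb.
Qed.

Lemma sum_subatoms_disjoint m (Ks : seq (nat * set R)) (P : pred (nat * set R))
    (I : set R) (G : set R -> R) :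
  uniq Ks -> (forall L, 0 <= G L) -> (forall K, K \in Ks -> K.2 `<=` I) ->
  (forall K K' z, K \in Ks -> K' \in Ks -> K.2 z -> K'.2 z -> K = K') ->
  \sum_(K <- Ks | P K) \sum_(L <- subatoms m K.2) G L <= \sum_(L <- subatoms m I) G L.
Proof.
move=> uK G0 KI Kd.
have -> : \sum_(K <- Ks | P K) \sum_(L <- subatoms m K.2) G L =
    \sum_(K <- Ks | P K) \sum_(L <- subatoms m I) (if subsetb L K.2 then G L else 0).
  rewrite big_seq_cond [RHS]big_seq_cond; apply: eq_bigr => K /andP[Kin _].
  by rewrite (perm_big _ (perm_subatoms m (KI K Kin))) big_filter big_mkcond.
rewrite exchange_big /= big_seq [X in _ <= X]big_seq; apply: ler_sum => L Lin.
rewrite -big_mkcondr /=; apply: sumr_le_unique => //.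
move=> a b ain bin /andP[_ /asboolP sa] /andP[_ /asboolP sb].
have /subatomsP [DL _] := Lin; have [z Lz] := atom_nonempty DL.
exact: Kd ain bin (sa _ Lz) (sb _ Lz).
Qed.

End Atoms.

Section Chains.
Context {R : realType} (nu : probability R R) (D : nat -> set (set R)) (f : R -> R).
Hypotheses (hD : atomic_filtration nu D) (intf : nu.-integrable I0 (EFin \o f)).

Local Notation atom_at := (atom_at D).
Local Notation adapted := (adapted D).

Lemma integrable_atom n L (g : R -> R) :
  nu.-integrable I0 (EFin \o g) -> D n L -> nu.-integrable L (EFin \o g).
Proof.
by move=> ig DL; apply: integrableS measurable_I0 (atom_measurable hD DL) (atom_subI0 hD DL) ig.
Qed.

Lemma integrable_normf : nu.-integrable I0 (EFin \o (fun y => `|f y|)).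
Proof. exact: integrable_norm intf. Qed.

Lemma mass_avg n L (g : R -> R) :
  D n L -> mass nu L * avg nu L g = \int[nu]_(x in L) g x.
Proof. by move=> DL; rewrite /avg mulrA mulfV ?mul1r //; exact/lt0r_neq0/(mass_gt0 hD DL). Qed.

Definition avg_at n x := avg nu (atom_at n x) f.
Definition absavg_at n x := avg nu (atom_at n x) (fun y => `|f y|).
Definition jump j x := avg_at j.+1 x - avg_at j x.

Lemma absavg_at_ge0 n x : 0 <= absavg_at n x.
Proof. exact: avg_norm_ge0. Qed.

Lemma normr_avg_at_le n x : I0 x -> `|avg_at n x| <= absavg_at n x.
Proof.
move=> x0; have [Dn _] := atom_atP hD n x0.
by apply: normr_avg_le (atom_measurable hD Dn) (integrable_atom intf Dn).
Qed.

Lemma sqr_avg_at_le n x : I0 x -> avg_at n x ^+ 2 <= absavg_at n x ^+ 2.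
Proof.
move=> x0; rewrite -real_normK ?num_real // lerXn2r ?nnegrE ?absavg_at_ge0 //.
exact: normr_avg_at_le.
Qed.

Lemma sqr_jump_le j x : I0 x ->
  jump j x ^+ 2 <= 2 * absavg_at j.+1 x ^+ 2 + 2 * absavg_at j x ^+ 2.
Proof.
move=> x0; have h1 := sqr_avg_at_le j.+1 x0; have h2 := sqr_avg_at_le j x0.
have := sqr_ge0 (avg_at j.+1 x + avg_at j x); rewrite /jump; nra.
Qed.

Lemma adapted_avg_at j n (g : R -> R) : (j <= n)%N ->
  adapted n (fun x => avg nu (atom_at j x) g).
Proof. by move=> jn x y x0 y0 e; rewrite (adapted_atom_at hD jn x0 y0 e). Qed.

Lemma adapted_jump j n : (j < n)%N -> adapted n (jump j).
Proof.
move=> jn x y x0 y0 e.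
rewrite /jump /avg_at (adapted_avg_at f jn x0 y0 e).
by rewrite (adapted_avg_at f (ltnW jn) x0 y0 e).
Qed.

Definition stop_crit (s t : nat) x : bool :=
  (4 * absavg_at s x < absavg_at t x) ||
  (96 * absavg_at s x ^+ 2 < \sum_(s <= j < t) jump j x ^+ 2).

Fixpoint last_stop n x : nat :=
  if n is n'.+1 then
    if stop_crit (last_stop n' x) n x then n else last_stop n' x
  else 0.

Lemma last_stop_le n x : (last_stop n x <= n)%N.
Proof. by elim: n => //= n IH; case: ifP => // _; exact: leq_trans IH (leqnSn _). Qed.

Lemma last_stop_mono j n x : (j <= n)%N -> (last_stop j x <= last_stop n x)%N.
Proof.
elim: n => [|n IH]; first by rewrite leqn0 => /eqP ->.
rewrite leq_eqVlt => /orP[/eqP -> //|]; rewrite ltnS => /IH h /=.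
by case: ifP => // _; apply: leq_trans h (leq_trans (last_stop_le _ _) (leqnSn _)).
Qed.

Lemma last_stop_id n x : last_stop (last_stop n x) x = last_stop n x.
Proof. by elim: n => //= n IH; case: ifP => //= c; rewrite c. Qed.

Lemma adapted_stop_crit s t n : (s <= t <= n)%N -> adapted n (stop_crit s t).
Proof.
move=> /andP[st tn] x y x0 y0 e.
have sn := leq_trans st tn; rewrite /stop_crit.
rewrite /absavg_at (adapted_avg_at _ tn x0 y0 e) (adapted_avg_at _ sn x0 y0 e).
congr (_ || (_ < _)); apply: eq_big_nat => j /andP[_ jt].
by rewrite (adapted_jump (leq_trans jt tn) x0 y0 e).
Qed.

Lemma adapted_last_stop j n : (j <= n)%N -> adapted n (last_stop j).
Proof.
move=> jn x y x0 y0 e; elim: j jn => // j IH jn /=.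
rewrite IH ?(ltnW jn) // (adapted_stop_crit _ x0 y0 e) //.
by rewrite jn andbT (leq_trans (last_stop_le _ _) (leqnSn _)).
Qed.

Definition stop_term j x := if last_stop j x == j then absavg_at j x ^+ 2 else 0.

(* When the criterion fires at [n.+1] after [s], the squares from [s] on add up to at most
   96 m_s^2 + 2 m_n^2 + 2 m_(n+1)^2, where m = absavg_at and m_n <= 4 m_s; the last term is
   carried to the next stop, whence 130 = 96 + 2 * 16 + 2. *)
Lemma stopping_invariant n x : I0 x ->
  let s := last_stop n x in
  [/\ \sum_(j < n) jump j x ^+ 2 <=
        130 * (\sum_(j < n.+1) stop_term j x - absavg_at s x ^+ 2) +
        \sum_(s <= j < n) jump j x ^+ 2 + 2 * absavg_at s x ^+ 2,
      \sum_(s <= j < n) jump j x ^+ 2 <= 96 * absavg_at s x ^+ 2 &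
      absavg_at n x <= 4 * absavg_at s x].
Proof.
move=> x0; elim: n => [|n IH] /=.
  rewrite big_ord0 big_geq // big_ord_recr big_ord0 /stop_term /= add0r subrr mulr0 add0r.
  have := absavg_at_ge0 0 x; split; [nra|nra|lra].
case: IH; set s := last_stop n x => IH1 IH2 IH3.
have ms0 := absavg_at_ge0 s x; have m1 := absavg_at_ge0 n.+1 x.
have hd := sqr_jump_le n x0.
have hn : absavg_at n x ^+ 2 <= 16 * absavg_at s x ^+ 2.
  by have := absavg_at_ge0 n x; nra.
rewrite big_ord_recr /= [\sum_(j < n.+2) _]big_ord_recr /= [stop_term n.+1 x]/stop_term.
have -> : last_stop n.+1 x = if stop_crit s n.+1 x then n.+1 else s by [].
have [crit|crit] := boolP (stop_crit s n.+1 x).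
- rewrite eqxx big_geq //.
  set T := \sum_(i < n.+1) _ in IH1 *; set P := \sum_(i < n) _ in IH1 *.
  set Q := \sum_(s <= j < n) _ in IH1 IH2.
  by split; [lra|rewrite mulr_ge0 // sqr_ge0|lra].
- have sn : (s != n.+1)%N by rewrite neq_ltn ltnS last_stop_le.
  rewrite (negbTE sn) addr0 big_nat_recr ?last_stop_le //=.
  move: crit; rewrite /stop_crit negb_or -!leNgt => /andP[c1 c2].
  rewrite big_nat_recr ?last_stop_le //= in c2.
  set T := \sum_(i < n.+1) _ in IH1 *; set P := \sum_(i < n) _ in IH1 *.
  set Q := \sum_(s <= j < n) _ in IH1 IH2 c2 *.
  by split; [lra|exact: c2|exact: c1].
Qed.

Lemma sum_sqr_jump_le n x : I0 x ->
  \sum_(j < n) jump j x ^+ 2 <= 130 * \sum_(j < n.+1) stop_term j x.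
Proof.
move=> x0; case: (stopping_invariant n x0) => h1 h2 _.
have := sqr_ge0 (absavg_at (last_stop n x) x).
set T := \sum_(i < n.+1) _ in h1 *; set P := \sum_(i < n) _ in h1 *.
set Q := \sum_(_ <= j < n) _ in h1 h2; lra.
Qed.

Lemma indic_atom_at n x : I0 x -> \1_(atom_at n x) x = 1 :> R.
Proof. by move=> x0; rewrite indicE mem_set //; exact: (atom_atP hD n x0).2. Qed.

Lemma mdiff_atom_at n x : I0 x -> mdiff nu D (n, atom_at n x) f x = jump n x.
Proof.
move=> x0; have chx : ch D (n, atom_at n x) (atom_at n.+1 x).
  by split; [exact: (atom_atP hD n.+1 x0).1|exact: (atom_at_subS hD x0)].
have fin_ch : finite_set (ch D (n, atom_at n x)).
  by apply: sub_finite_set (atoms_finite hD n.+1) => J [].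
rewrite /mdiff (fsbigD1 (atom_at n.+1 x)) // fsbig1.
  by rewrite /= addr0 /condE !indic_atom_at // !mulr1.
move=> J [[DJ _] nJ]; rewrite /condE indicE memNset ?mulr0 // => Jx.
by apply: nJ; rewrite /= (atom_atE hD x0 DJ Jx).
Qed.

Lemma mdiff_notin n L x : ~ L x -> mdiff nu D (n, L) f x = 0.
Proof.
move=> nL; rewrite /mdiff fsbig1 ?sub0r /condE /= ?indicE ?memNset ?mulr0 ?oppr0 //.
by move=> J [_ sJ]; rewrite indicE memNset ?mulr0 // => /sJ.
Qed.

Lemma esum_sqr_mdiff x : I0 x ->
  (\esum_(p in atoms D) ((mdiff nu D p f x) ^+ 2)%:E =
   \sum_(0 <= n <oo) ((jump n x) ^+ 2)%:E)%E.
Proof.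
move=> x0; pose chain n : nat * set R := (n, atom_at n x).
transitivity (\esum_(p in range chain) ((mdiff nu D p f x) ^+ 2)%:E)%E.
  rewrite esum_mkcond [RHS]esum_mkcond; apply: eq_esum => -[n L] _.
  have [Lx|nLx] := pselect (L x); last by rewrite mdiff_notin // expr0n /= !if_same.
  have [DL|nDL] := pselect (D n L).
    have eL := atom_atE hD x0 DL Lx; subst L.
    by rewrite !mem_set //; exists n.
  rewrite !memNset // => -[m _ [mn eL]].
  by apply: nDL; rewrite -eL -mn; exact: (atom_atP hD m x0).1.
rewrite esum_set_image //.
- rewrite eseries_mkcond; apply: eq_eseriesr => n _.
  by rewrite in_setT mdiff_atom_at.
- by move=> n _; rewrite lee_fin sqr_ge0.
- by move=> a b _ _ [].
Qed.

Definition stopping_atoms : set (nat * set R) :=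
  [set p | exists2 x, I0 x & last_stop p.1 x = p.1 /\ p.2 = atom_at p.1 x].

Lemma stopping_atoms_sub : stopping_atoms `<=` atoms D.
Proof. by move=> [n L] [x x0 [_ /= ->]]; exact: (atom_atP hD n x0).1. Qed.

Lemma series_stop_term_le x : I0 x ->
  (\sum_(0 <= n <oo) (stop_term n x)%:E <=
   \esum_(p in stopping_atoms) ((avg nu p.2 (fun y => `|f y|)) ^+ 2 * \1_(p.2) x)%:E)%E.
Proof.
move=> x0; pose chain n : nat * set R := (n, atom_at n x).
pose F (p : nat * set R) : \bar R := ((avg nu p.2 (fun y => `|f y|)) ^+ 2 * \1_(p.2) x)%:E.
have F0 p : (0 <= F p)%E by rewrite lee_fin mulr_ge0 ?sqr_ge0 // indicE ler0n.
apply: (@le_trans _ _ (\esum_(p in chain @` [set n | last_stop n x = n]) F p)%E).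
  rewrite esum_set_image //; last by move=> a b _ _ [].
  rewrite eseries_mkcond [X in (_ <= X)%E]eseries_mkcond.
  apply: lee_nneseries => [n _ _|n _].
    by rewrite lee_fin /stop_term; case: ifP => _; rewrite ?sqr_ge0.
  rewrite /stop_term /F /=; case: (last_stop n x =P n) => ln.
    by rewrite mem_set // indic_atom_at // mulr1.
  by rewrite memNset.
rewrite esum_mkcond [X in (_ <= X)%E]esum_mkcond; apply: le_esum => p _.
case: ifP => pe; last by case: ifP => // _; exact: F0.
suff -> : p \in stopping_atoms by [].
by apply/mem_set; move: pe; rewrite inE => -[n ln <-]; exists x.
Qed.

Lemma series_sqr_jump_le x : I0 x ->
  (\sum_(0 <= n <oo) ((jump n x) ^+ 2)%:E <=
   130%:E * \sum_(0 <= n <oo) (stop_term n x)%:E)%E.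
Proof.
move=> x0; have st0 n : (0 <= (stop_term n x)%:E)%E.
  by rewrite lee_fin /stop_term; case: ifP => _; rewrite ?sqr_ge0.
apply: lime_le; first by apply: is_cvg_nneseries => n _ _; rewrite lee_fin sqr_ge0.
apply: nearW => n; rewrite sumEFin big_mkord.
apply: (@le_trans _ _ (130%:E * \sum_(0 <= j < n.+1) (stop_term j x)%:E)%E).
  by rewrite sumEFin big_mkord -EFinM lee_fin sum_sqr_jump_le.
by apply: lee_wpmul2l; [rewrite lee_fin|exact: nneseries_lim_ge].
Qed.

Lemma sqfun_le_sparse x : I0 x ->
  (sqfun nu D f x <= (Num.sqrt 130)%:E * sparse_sqfun nu stopping_atoms f x)%E.
Proof.
move=> x0; rewrite /sqfun /sparse_sqfun esum_sqr_mdiff //.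
rewrite -[(Num.sqrt 130)%:E]/(sqrte (130%:E : \bar R)) -sqrteM ?lee_fin // lee_sqrt.
  apply: le_trans (series_sqr_jump_le x0) _.
  by apply: lee_wpmul2l; [rewrite lee_fin|exact: series_stop_term_le].
apply: mule_ge0; rewrite ?lee_fin //; apply: esum_ge0 => p _.
by rewrite lee_fin mulr_ge0 ?sqr_ge0 // indicE ler0n.
Qed.

End Chains.

Section Energy.
Context {R : realType} (nu : probability R R) (D : nat -> set (set R)) (f : R -> R).
Hypotheses (hD : atomic_filtration nu D) (intf : nu.-integrable I0 (EFin \o f)).

Local Notation atom_at := (atom_at D).
Local Notation mass := (mass nu).
Local Notation avg_at := (avg_at nu D f).
Local Notation absavg_at := (absavg_at nu D f).
Local Notation jump := (jump nu D f).

Fixpoint capped (lam : R) (n j : nat) y : bool :=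
  if j is j'.+1 then capped lam n j' y && ((j <= n)%N || (absavg_at j y <= 4 * lam))
  else true.

Definition capped_energy lam n N y :=
  \sum_(n <= j < N) (if capped lam n j.+1 y then jump j y ^+ 2 else 0).

Lemma capped_le lam n j y : (j <= n)%N -> capped lam n j y.
Proof. by elim: j => //= j IH jn; rewrite IH ?jn // ltnW. Qed.

Lemma capped_absavg_le lam n j y : (n < j)%N -> capped lam n j y ->
  absavg_at j y <= 4 * lam.
Proof. by case: j => // j nj /= /andP[_]; rewrite leqNgt nj. Qed.

Lemma adapted_capped lam n j N : (j <= N)%N -> adapted D N (capped lam n j).
Proof.
move=> jN x y x0 y0 e; elim: j jN => // j IH jN /=.
by rewrite IH ?(ltnW jN) // /absavg_at (adapted_avg_at hD _ jN x0 y0 e).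
Qed.

Lemma adapted_capped_energy lam n N : adapted D N (capped_energy lam n N).
Proof.
move=> x y x0 y0 e; apply: eq_big_nat => j /andP[_ jN].
by rewrite (adapted_capped _ _ jN x0 y0 e) (adapted_jump f hD jN x0 y0 e).
Qed.

Lemma capped_energyS lam n N y : (n <= N)%N ->
  capped_energy lam n N.+1 y =
  capped_energy lam n N y + (if capped lam n N.+1 y then jump N y ^+ 2 else 0).
Proof. by move=> nN; rewrite /capped_energy big_nat_recr. Qed.

Lemma capped_energy_ge0 lam n N y : 0 <= capped_energy lam n N y.
Proof. by apply: sumr_ge0 => j _; case: ifP => _; rewrite ?sqr_ge0. Qed.

Lemma capped_energy_mono lam n N M y : (n <= N <= M)%N ->
  capped_energy lam n N y <= capped_energy lam n M y.
Proof.
move=> /andP[nN]; elim: M => [|M IH]; first by rewrite leqn0 => /eqP ->.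
rewrite leq_eqVlt => /orP[/eqP -> //|]; rewrite ltnS => NM.
rewrite capped_energyS ?(leq_trans nN NM) //; apply: le_trans (IH NM) _.
by rewrite lerDl; case: ifP => _; rewrite ?sqr_ge0.
Qed.

Definition rep (L : set R) : R := xget 0 L.

Lemma rep_in n L : D n L -> L (rep L).
Proof. by move=> DL; exact: (xgetPex 0 (atom_nonempty hD DL)). Qed.

Variables (n : nat) (I : set R).
Hypothesis DI : D n I.
Let lam := avg nu I (fun y => `|f y|).

(* Summed over the atoms of generation [N] in [I], the potential decreases with [N]
   (potential_step): while capped, the energy gained is the growth of the square of the
   average; when the cap is broken, the last jump is paid for by [8 lam |f|]. *)
Definition potential N L :=
  let r := rep L in
  mass L * capped_energy lam n N r
  - (if capped lam n N r then mass L * avg_at N r ^+ 2 else 0)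
  - 8 * lam * (if capped lam n N r then 0 else \int[nu]_(y in L) `|f y|).

Lemma rep_subatoms N L : (n <= N)%N -> L \in subatoms D N I ->
  [/\ I0 (rep L), atom_at N (rep L) = L, atom_at n (rep L) = I & D N L].
Proof.
move=> nN /(subatomsP hD) [DL LI]; have rL := rep_in DL; have r0 := atom_subI0 hD DL rL.
by split => //; [exact: (atom_atE hD r0 DL rL)|exact: (atom_atE hD r0 DI (LI _ rL))].
Qed.

Lemma capped_absavg_at_le N y : (n <= N)%N -> I0 y -> atom_at n y = I ->
  capped lam n N y -> absavg_at N y <= 4 * lam.
Proof.
move=> nN y0 eny al; have [nN'|Nn] := ltnP n N; first exact: capped_absavg_le al.
have -> : N = n by apply/eqP; rewrite eqn_leq Nn nN.
by rewrite /absavg_at eny; have := avg_norm_ge0 nu I f; rewrite -/lam; lra.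
Qed.

Lemma potential_child N L L' : (n <= N)%N -> L \in subatoms D N I ->
  L' \in subatoms D N.+1 L ->
  let r := rep L in
  potential N.+1 L' <=
  (if capped lam n N r then
     mass L' * (capped_energy lam n N r + avg_at N r ^+ 2)
     - 2 * avg_at N r * \int[nu]_(y in L') f y
   else mass L' * capped_energy lam n N r - 8 * lam * \int[nu]_(y in L') `|f y|).
Proof.
move=> nN Lin L'in /=.
have [r0 erL enr DL] := rep_subatoms nN Lin.
have /(subatomsP hD) [DL' L'L] := L'in.
have r'L' := rep_in DL'; have r'0 := atom_subI0 hD DL' r'L'.
have e : atom_at N (rep L') = atom_at N (rep L).
  by rewrite erL; exact: (atom_atE hD r'0 DL (L'L _ r'L')).
have er' : atom_at N.+1 (rep L') = L' := atom_atE hD r'0 DL' r'L'.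
rewrite /potential /= capped_energyS //= (adapted_capped_energy _ _ r'0 r0 e).
rewrite (adapted_capped _ _ (leqnn N) r'0 r0 e) /jump.
rewrite /avg_at (adapted_avg_at hD f (leqnn N) r'0 r0 e) -!/(avg_at _ _).
have ha' : mass L' * avg_at N.+1 (rep L') = \int[nu]_(y in L') f y.
  by rewrite /avg_at er'; exact: (mass_avg hD f DL').
have hRi : `|\int[nu]_(y in L') f y| <= \int[nu]_(y in L') `|f y|.
  exact: le_normr_Rintegral (atom_measurable hD DL') (integrable_atom hD intf DL').
have hRi0 : 0 <= \int[nu]_(y in L') `|f y| by apply: Rintegral_ge0.
have m'0 : 0 < mass L' := mass_gt0 hD DL'.
set a := avg_at N (rep L) in ha' *; set a' := avg_at N.+1 (rep L') in ha' *.
set E0 := capped_energy lam n N (rep L).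
case al : (capped lam n N (rep L)) => /=; last by rewrite addr0 subr0.
have ha : `|a| <= 4 * lam.
  apply: le_trans (normr_avg_at_le hD intf _ r0) _; exact: capped_absavg_at_le.
have l0 := avg_norm_ge0 nu I f.
rewrite (_ : (N < n)%N = false) /=; last by rewrite ltnNge nN.
case: ifP => _ /=.
- by rewrite mulr0 subr0 -ha'; set m := mass L'; nra.
- rewrite addr0 subr0.
  have a_int_le : a * \int[nu]_(y in L') f y <= `|a| * `|\int[nu]_(y in L') f y|.
    by rewrite -normrM ler_norm.
  have := normr_ge0 a; have := normr_ge0 (\int[nu]_(y in L') f y).
  have : 0 <= mass L' * a ^+ 2 by rewrite mulr_ge0 ?sqr_ge0 // ltW.
  nra.
Qed.

Lemma potential_step N L : (n <= N)%N -> L \in subatoms D N I ->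
  \sum_(L' <- subatoms D N.+1 L) potential N.+1 L' <= potential N L.
Proof.
move=> nN Lin; have [r0 erL enr DL] := rep_subatoms nN Lin.
apply: le_trans.
  by rewrite big_seq; apply: ler_sum => L' L'in; exact: potential_child nN Lin L'in.
rewrite -big_seq /potential /=.
have ha : mass L * avg_at N (rep L) = \int[nu]_(y in L) f y.
  by rewrite /avg_at erL; exact: (mass_avg hD f DL).
set a := avg_at N (rep L) in ha *; set E0 := capped_energy lam n N (rep L).
case: (capped lam n N (rep L)); rewrite sumrB -mulr_sumr -mulr_suml.
- rewrite -(mass_subatoms hD (leqnSn N) DL) -(Rintegral_subatoms hD intf (leqnSn N) DL).
  by rewrite -ha; lra.
- rewrite -(mass_subatoms hD (leqnSn N) DL).
  by rewrite -(Rintegral_subatoms hD (integrable_normf intf) (leqnSn N) DL); lra.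
Qed.

Lemma sum_potential_le0 N : (n <= N)%N -> \sum_(L <- subatoms D N I) potential N L <= 0.
Proof.
have base L : L \in subatoms D n I -> potential n L <= 0.
  move=> Lin; have [r0 erL enr DL] := rep_subatoms (leqnn n) Lin.
  rewrite /potential /= capped_le // /capped_energy big_geq // !mulr0 subr0 sub0r.
  by rewrite oppr_le0 mulr_ge0 ?sqr_ge0 // ltW // (mass_gt0 hD DL).
elim: N => [|N IH]; first by rewrite leqn0 => /eqP <-; rewrite big_seq sumr_le0.
rewrite leq_eqVlt => /orP[/eqP <-|]; first by rewrite big_seq sumr_le0.
rewrite ltnS => nN; rewrite (big_subatomsS hD _ DI nN).
apply: le_trans (IH nN); rewrite big_seq [X in _ <= X]big_seq.
by apply: ler_sum => L Lin; exact: potential_step.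
Qed.

Lemma capped_energy_bound N : (n <= N)%N ->
  \sum_(L <- subatoms D N I) mass L * capped_energy lam n N (rep L) <=
  24 * lam ^+ 2 * mass I.
Proof.
move=> nN; have l0 : 0 <= lam := avg_norm_ge0 nu I f.
have hI : mass I * lam = \int[nu]_(y in I) `|f y| by exact: (mass_avg hD _ DI).
apply: (@le_trans _ _ (\sum_(L <- subatoms D N I) (potential N L + 16 * lam ^+ 2 * mass L
    + 8 * lam * \int[nu]_(y in L) `|f y|))).
  rewrite big_seq [X in _ <= X]big_seq; apply: ler_sum => L Lin.
  have [r0 erL enr DL] := rep_subatoms nN Lin.
  have m0 := mass_gt0 hD DL; have R0 : 0 <= \int[nu]_(y in L) `|f y| by apply: Rintegral_ge0.
  rewrite /potential /=; case al: (capped lam n N (rep L)).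
  - have hb := capped_absavg_at_le nN r0 enr al.
    have ha := sqr_avg_at_le hD intf N r0; have hm0 := absavg_at_ge0 nu D f N (rep L).
    have : absavg_at N (rep L) ^+ 2 <= 16 * lam ^+ 2 by nra.
    set b := avg_at N (rep L) ^+ 2 in ha *; set c := absavg_at N (rep L) ^+ 2 in ha *.
    nra.
  - have : 0 <= lam * \int[nu]_(y in L) `|f y| by rewrite mulr_ge0.
    have : 0 <= lam ^+ 2 * mass L by rewrite mulr_ge0 ?sqr_ge0 ?ltW.
    lra.
rewrite big_split big_split /= -mulr_sumr -mulr_sumr -(mass_subatoms hD nN DI).
rewrite -(Rintegral_subatoms hD (integrable_normf intf) nN DI) -hI.
have := sum_potential_le0 nN; have : 0 <= lam ^+ 2 * mass I.
  by rewrite mulr_ge0 ?sqr_ge0 // ltW // (mass_gt0 hD DI).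
set P := \sum_(i <- _) _; nra.
Qed.

End Energy.

Section StoppingChildren.
Context {R : realType} (nu : probability R R) (D : nat -> set (set R)) (f : R -> R).
Hypotheses (hD : atomic_filtration nu D) (intf : nu.-integrable I0 (EFin \o f)).

Local Notation atom_at := (atom_at D).
Local Notation mass := (mass nu).
Local Notation absavg_at := (absavg_at nu D f).
Local Notation avg_at := (avg_at nu D f).
Local Notation jump := (jump nu D f).
Local Notation stop_crit := (stop_crit nu D f).
Local Notation last_stop := (last_stop nu D f).
Local Notation Sp := (stopping_atoms nu D f).
Local Notation capped := (capped nu D f).
Local Notation capped_energy := (capped_energy nu D f).

Variables (n : nat) (x0 : R).
Hypotheses (x00 : I0 x0) (stop_n : last_stop n x0 = n).
Local Notation I := (atom_at n x0).
Local Notation lam := (absavg_at n x0).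

Lemma stopping_child t L z : chS Sp (n, I) (t, L) -> L z ->
  [/\ I0 z, atom_at n z = I, (n < t)%N, atom_at t z = L & last_stop t z = t].
Proof.
move=> [[y y0 /= [stop_y eL]] [/= nt LI neq] _] Lz.
have [z0 etz] : I0 z /\ atom_at t z = atom_at t y by apply: (atom_at_mem hD y0); rewrite -eL.
have enz : atom_at n z = I := atom_atE hD z0 (atom_atP hD n x00).1 (LI _ Lz).
have tn : t != n.
  by apply/eqP => tn; apply: neq; congr pair => //=; rewrite eL -etz -enz tn.
split => //; first by rewrite ltn_neqAle eq_sym tn.
  by rewrite etz eL.
by rewrite (adapted_last_stop f hD (leqnn t) z0 y0 etz).
Qed.

Lemma stopping_child_last_stop t L z : chS Sp (n, I) (t, L) -> L z ->
  forall j, (n <= j < t)%N -> last_stop j z = n.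
Proof.
move=> hK Lz j /andP[nj jt]; have [z0 enz nt etz _] := stopping_child hK Lz.
have [_ [_ LI _] nomax] := hK.
have stop_nz : last_stop n z = n.
  by rewrite (adapted_last_stop f hD (leqnn n) z0 x00 enz).
set s := last_stop j z; have ns : (n <= s)%N by rewrite -{1}stop_nz last_stop_mono.
have sj : (s <= j)%N := last_stop_le _ _ _ j z.
have st : (s < t)%N := leq_ltn_trans sj jt.
apply/eqP; rewrite eqn_leq ns andbT leqNgt; apply/negP => ns'.
apply: nomax; exists (s, atom_at s z); split.
- by exists z => //=; split => //; rewrite /s last_stop_id.
- split => /=; first exact: ltnW st.
    by rewrite -etz; exact: (atom_at_sub hD z0 (ltnW st)).
  by case=> ts _; move: st; rewrite ts ltnn.
- split => /=; first exact: ltnW ns'.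
    by rewrite -enz; exact: (atom_at_sub hD z0 (ltnW ns')).
  by case=> sn _; move: ns'; rewrite sn ltnn.
Qed.

Lemma stopping_child_crit t L z : chS Sp (n, I) (t, L) -> L z ->
  stop_crit n t z /\ forall j, (n < j < t)%N -> ~~ stop_crit n j z.
Proof.
move=> hK Lz; have [_ _ nt _ stop_t] := stopping_child hK Lz.
have hj := stopping_child_last_stop hK Lz.
have crit_at j : (n < j <= t)%N -> last_stop j z = (if stop_crit n j z then j else n).
  case: j => // j /andP[nj jt] /=.
  by rewrite (hj j) // -ltnS nj jt.
split.
  move: stop_t; rewrite (crit_at t) ?nt ?leqnn //.
  by case: ifP => // _ tn; move: nt; rewrite tn ltnn.
move=> j /andP[nj jt]; have := hj j; rewrite (ltnW nj) jt => /(_ erefl).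
rewrite (crit_at j) ?nj ?(ltnW jt) //.
by case: ifP => // _ jn; move: nj; rewrite jn ltnn.
Qed.

Lemma stopping_children_disjoint K K' z : chS Sp (n, I) K -> chS Sp (n, I) K' ->
  K.2 z -> K'.2 z -> K = K'.
Proof.
case: K => t L; case: K' => t' L' hK hK' /= Lz L'z.
have [_ _ nt etz stop_t] := stopping_child hK Lz.
have [_ _ nt' etz' stop_t'] := stopping_child hK' L'z.
suff tt' : t = t' by rewrite -etz -etz' tt'.
apply/eqP; rewrite eqn_leq; apply/andP; split; rewrite leqNgt; apply/negP => h.
- have := stopping_child_last_stop hK Lz (j := t'); rewrite (ltnW nt') h stop_t'.
  by move=> /(_ erefl) e; move: nt'; rewrite e ltnn.
- have := stopping_child_last_stop hK' L'z (j := t); rewrite (ltnW nt) h stop_t.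
  by move=> /(_ erefl) e; move: nt; rewrite e ltnn.
Qed.

Lemma absavg_at_lam0 j z : I0 z -> atom_at n z = I -> (n <= j)%N -> lam = 0 ->
  absavg_at j z = 0 /\ avg_at j z = 0.
Proof.
move=> z0 enz nj l0; have [Dn _] := atom_atP hD n x00.
have normf_ge0 L : 0 <= \int[nu]_(y in L) `|f y| by apply: Rintegral_ge0.
have intI : \int[nu]_(y in I) `|f y| = 0.
  by rewrite -(mass_avg hD (fun y => `|f y|) Dn); move: l0; rewrite /absavg_at => ->; rewrite mulr0.
have int0 : \int[nu]_(y in atom_at j z) `|f y| = 0.
  apply/eqP; rewrite eq_le normf_ge0 andbT -intI.
  rewrite (Rintegral_subatoms hD (integrable_normf intf) nj Dn).
  apply: (ler_sum_mem (F := fun L => \int[nu]_(y in L) `|f y|)).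
  - exact: subatoms_uniq.
  - apply/(subatomsP hD); split; first exact: (atom_atP hD j z0).1.
    by rewrite -enz; exact: (atom_at_sub hD z0 nj).
  - by move=> L _ /=.
have abs0 : absavg_at j z = 0 by rewrite /absavg_at /avg int0 mulr0.
split => //; apply/eqP; rewrite -normr_eq0 eq_le normr_ge0 andbT -abs0.
exact: normr_avg_at_le.
Qed.

Lemma no_stopping_child_lam0 K : lam = 0 -> ~ chS Sp (n, I) K.
Proof.
case: K => t L l0 hK; have [[y y0 /= [_ eL]] _ _] := hK.
have Ly : L y by rewrite eL; exact: (atom_atP hD t y0).2.
have [y0' eny nt _ _] := stopping_child hK Ly.
have [+ _] := stopping_child_crit hK Ly; rewrite /stop_crit.
have [-> _] := absavg_at_lam0 y0' eny (leqnn n) l0.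
have [-> _] := absavg_at_lam0 y0' eny (ltnW nt) l0.
rewrite mulr0 ltxx /= expr0n /= mulr0 big_nat big1 ?ltxx // => j /andP[nj jt].
have [_ a1] := absavg_at_lam0 y0' eny (leq_trans nj (leqnSn j)) l0.
have [_ a2] := absavg_at_lam0 y0' eny nj l0.
by rewrite /jump a1 a2 subrr expr0n.
Qed.

Lemma capped_stopping_child t L z : chS Sp (n, I) (t, L) -> L z ->
  absavg_at t z <= 4 * lam -> forall j, (j <= t)%N -> capped lam n j z.
Proof.
move=> hK Lz cap_t; have [z0 enz nt _ _] := stopping_child hK Lz.
have [_ no_crit] := stopping_child_crit hK Lz.
have lam_z : absavg_at n z = lam by rewrite /absavg_at enz.
elim=> // j IH jt /=; rewrite IH ?(ltnW jt) //=.
case: (leqP j.+1 n) => //= nj.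
move: jt; rewrite leq_eqVlt => /orP[/eqP -> //|jt].
by have := no_crit j.+1; rewrite nj jt /stop_crit negb_or lam_z -leNgt => /(_ erefl) /andP[].
Qed.

Lemma capped_energy_stopping_child t L z : chS Sp (n, I) (t, L) -> L z ->
  absavg_at t z <= 4 * lam -> 96 * lam ^+ 2 < capped_energy lam n t z.
Proof.
move=> hK Lz cap_t; have [z0 enz nt _ _] := stopping_child hK Lz.
have [crit _] := stopping_child_crit hK Lz.
have lam_z : absavg_at n z = lam by rewrite /absavg_at enz.
have cap := capped_stopping_child hK Lz cap_t.
rewrite /capped_energy big_nat_cond (eq_bigr (fun j => jump j z ^+ 2)); last first.
  by move=> j /andP[/andP[_ jt] _]; rewrite cap.
rewrite -big_nat_cond; move: crit; rewrite /stop_crit lam_z => /orP[|//].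
by rewrite ltNge cap_t.
Qed.

Lemma stopping_child_atom K : chS Sp (n, I) K -> D K.1 K.2 /\ K.2 `<=` I.
Proof.
case: K => t L [[y y0 /= [_ eL]] [_ LI _] _].
by split => //; rewrite eL; exact: (atom_atP hD t y0).1.
Qed.

Section FiniteFamily.
Variables (Ks : seq (nat * set R)) (N : nat).
Hypotheses (Ks_uniq : uniq Ks) (Ks_children : forall K, K \in Ks -> chS Sp (n, I) K).
Hypotheses (nN : (n <= N)%N) (KsN : forall K, K \in Ks -> (K.1 <= N)%N).

Let big_avg (K : nat * set R) := 4 * lam < avg nu K.2 (fun y => `|f y|).

Lemma Ks_disjoint K K' z : K \in Ks -> K' \in Ks -> K.2 z -> K'.2 z -> K = K'.
Proof. by move=> /Ks_children hK /Ks_children hK'; exact: stopping_children_disjoint. Qed.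

Lemma mass_big_avg_children : (\sum_(K <- Ks | big_avg K) mass K.2) * (4 * lam) <= lam * mass I.
Proof.
have [DI _] := atom_atP hD n x00.
rewrite mulr_suml; apply: (@le_trans _ _ (\sum_(K <- Ks | big_avg K)
    \sum_(L <- subatoms D N K.2) \int[nu]_(y in L) `|f y|)).
  rewrite big_seq_cond [X in _ <= X]big_seq_cond; apply: ler_sum => K /andP[KKs big_K].
  have [DK _] := stopping_child_atom (Ks_children KKs).
  rewrite -(Rintegral_subatoms hD (integrable_normf intf) (KsN KKs) DK) -(mass_avg hD _ DK).
  by rewrite ler_pM2l ?(mass_gt0 hD DK) // ltW.
apply: le_trans (sum_subatoms_disjoint hD _ _ (I := I) Ks_uniq _ _ Ks_disjoint) _.
- by move=> L; apply: Rintegral_ge0.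
- by move=> K /Ks_children/stopping_child_atom [_].
by rewrite -(Rintegral_subatoms hD (integrable_normf intf) nN DI) -(mass_avg hD _ DI) mulrC.
Qed.

Lemma mass_small_avg_children :
  (\sum_(K <- Ks | ~~ big_avg K) mass K.2) * (96 * lam ^+ 2) <= 24 * lam ^+ 2 * mass I.
Proof.
have [DI _] := atom_atP hD n x00.
rewrite mulr_suml; apply: (@le_trans _ _ (\sum_(K <- Ks | ~~ big_avg K)
    \sum_(L <- subatoms D N K.2) mass L * capped_energy lam n N (rep L))).
  rewrite big_seq_cond [X in _ <= X]big_seq_cond; apply: ler_sum => K /andP[KKs small_K].
  have [DK _] := stopping_child_atom (Ks_children KKs).
  rewrite (mass_subatoms hD (KsN KKs) DK) mulr_suml big_seq [X in _ <= X]big_seq.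
  apply: ler_sum => L /(subatomsP hD) [DL LK]; rewrite ler_pM2l ?(mass_gt0 hD DL) //.
  have rK := LK _ (rep_in hD DL); move: (Ks_children KKs) (KsN KKs) small_K rK.
  case: K {KKs DK LK} => t L' hK tN small_K rK.
  have [_ _ nt etz _] := stopping_child hK rK.
  have cap_t : absavg_at t (rep L) <= 4 * lam by rewrite /absavg_at etz leNgt.
  apply/ltW/(lt_le_trans (capped_energy_stopping_child hK rK cap_t)).
  by apply: capped_energy_mono; rewrite (ltnW nt).
apply: le_trans (sum_subatoms_disjoint hD _ _ (I := I) Ks_uniq _ _ Ks_disjoint) _.
- by move=> L; rewrite mulr_ge0 ?capped_energy_ge0 // fine_ge0.
- by move=> K /Ks_children/stopping_child_atom [_].
exact: (capped_energy_bound hD intf DI nN).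
Qed.

Lemma sum_mass_children_le : \sum_(K <- Ks) mass K.2 <= 2^-1 * mass I.
Proof.
have [DI _] := atom_atP hD n x00; have mI := mass_gt0 hD DI.
have [l0|lnz] := eqVneq lam 0.
  rewrite big_seq big1 ?mulr_ge0 ?invr_ge0 ?ltW // => K /Ks_children.
  by move/(no_stopping_child_lam0 l0).
have lpos : 0 < lam by rewrite lt_neqAle eq_sym lnz absavg_at_ge0.
have big_le := mass_big_avg_children; have small_le := mass_small_avg_children.
rewrite (bigID big_avg) /=.
set S1 := \sum_(K <- Ks | _) _ in big_le *; set S2 := \sum_(K <- Ks | ~~ _) _ in small_le *.
have S1_le : 4 * S1 <= mass I by nra.
have l2 : 0 < lam ^+ 2 by rewrite exprn_gt0.
have S2_le : 4 * S2 <= mass I by set l := lam ^+ 2 in l2 small_le; nra.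
lra.
Qed.

End FiniteFamily.

Lemma esum_mass_stopping_children :
  (\esum_(K in chS Sp (n, I)) nu K.2 <= (2^-1)%:E * nu I)%E.
Proof.
have [DI _] := atom_atP hD n x00.
apply: ge_ereal_sup => _ [X [finX XS] <-]; rewrite fsbig_finite //=.
set Ks := enum_fset (fset_set X).
have Ks_children K : K \in Ks -> chS Sp (n, I) K.
  by move=> KKs; apply: XS; move: KKs; rewrite -[K \in Ks]/(K \in fset_set X) in_fset_set // inE.
set N := maxn n (\max_(K <- Ks) K.1).
have KsN K : K \in Ks -> (K.1 <= N)%N.
  move=> KKs; apply: leq_trans (leq_maxr _ _).
  exact: (@leq_bigmax_seq _ Ks predT (fun K => K.1) K KKs).
rewrite (eq_big_seq (fun K => (mass K.2)%:E)); last first.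
  by move=> K /Ks_children/stopping_child_atom [DK _]; rewrite fineK // (atom_fin_num hD DK).
rewrite sumEFin -(fineK (atom_fin_num hD DI)) -EFinM lee_fin.
exact: (sum_mass_children_le (fset_uniq _) Ks_children (leq_maxl _ _) KsN).
Qed.

End StoppingChildren.

Unset Implicit Arguments.

Theorem lemma8p1 (R : realType) :
  exists C : R,
  forall (nu : probability R R) (D : nat -> set (set R)) (f : R -> R),
    nu I0 = 1%E ->
    atomic_filtration nu D ->
    nu.-integrable I0 (EFin \o f) ->
    exists S : set (nat * set R),
      sparse nu D S /\
      {ae nu, forall x, I0 x -> (sqfun nu D f x <= C%:E * sparse_sqfun nu S f x)%E}.
Proof.
exists (Num.sqrt 130) => nu D f _ hD intf.
exists (stopping_atoms nu D f); split.
- split; first exact: stopping_atoms_sub hD.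
  by case=> n I [x x0 /= [stop_n ->]]; exact: esum_mass_stopping_children.
- by apply: aeW => x x0; exact: sqfun_le_sparse.
Qed.
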